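(* Let $T$ be a tree on $n$ nodes, rooted at some node $r$, and let $k\ge1$. Call layer $i$ the set of nodes at distance exactly $i$ from $r$. Let $n_i$ be the number of nodes in layer $i$ (so $n_0=1$), and let $h$ be the depth of $T$, i.e., the largest distance from $r$ to a node. Then $$M^T_{k,n}\le \sum_{i=0}^h M^C_{k,n_i}.$$
   Context: For a graph $G$ on $n$ nodes, a measurement matrix for $G$ is a $0$-$1$ matrix with columns indexed by the nodes in which every nonzero row has a support that induces a connected subgraph of $G$. A vector is $k$-sparse if it has at most $k$ nonzero entries. $A$ identifies all $k$-sparse vectors if $Ax_1\ne Ax_2$ for every two distinct $k$-sparse $x_1,x_2\in\mathbb{R}^n$. $M^G_{k,n}$ is the minimum number of rows of a measurement matrix for $G$ that identifies all $k$-sparse vectors. $M^C_{k,N}$ is the minimum number of rows of an arbitrary $0$-$1$ matrix with $N$ columns that identifies all $k$-sparse vectors in $\mathbb{R}^N$. *)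

From HB Require Import structures.
From mathcomp Require Import all_boot all_order all_algebra.
From Stdlib Require Import ClassicalEpsilon.
Set Implicit Arguments. Unset Strict Implicit. Unset Printing Implicit Defensive.
Import Order.TTheory GRing.Theory Num.Theory.
Local Open Scope ring_scope.

Definition pbool (P : Prop) : bool :=
  if excluded_middle_informative P then true else false.

Lemma pboolP (P : Prop) : reflect P (pbool P).
Proof. rewrite /pbool; case: excluded_middle_informative => H; by constructor. Qed.

Definition simple_graph (n : nat) (e : rel 'I_n) : Prop :=
  symmetric e /\ irreflexive e.

Definition acyclic (n : nat) (e : rel 'I_n) : Prop :=
  forall c : seq 'I_n, uniq c -> (2 < size c)%N -> ~~ cycle e c.

Definition connected (n : nat) (e : rel 'I_n) : Prop :=
  forall u v : 'I_n, connect e u v.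

Definition is_tree (n : nat) (e : rel 'I_n) : Prop :=
  simple_graph e /\ connected e /\ acyclic e.

Definition walkb (n : nat) (e : rel 'I_n) (r v : 'I_n) (m : nat) : bool :=
  [exists p : m.-tuple 'I_n, path e r p && (last r p == v)].

(* graph distance from r to v: the least m with a walk of length m
   (in a connected graph on n nodes this is < n) *)
Definition dist (n : nat) (e : rel 'I_n) (r v : 'I_n) : nat :=
  find (walkb e r v) (iota 0 n).

Definition layer (n : nat) (e : rel 'I_n) (r : 'I_n) (i : nat) : {set 'I_n} :=
  [set v | dist e r v == i].

Definition depth (n : nat) (e : rel 'I_n) (r : 'I_n) : nat :=
  \max_(v : 'I_n) dist e r v.

Definition zero_one (R : nzRingType) (m n : nat) (A : 'M[R]_(m, n)) : bool :=
  [forall i, forall j, (A i j == 0) || (A i j == 1)].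

Definition row_support (R : nzRingType) (m n : nat) (A : 'M[R]_(m, n)) (i : 'I_m)
  : {set 'I_n} := [set j | A i j != 0].

Definition induced (n : nat) (e : rel 'I_n) (S : {set 'I_n}) : rel 'I_n :=
  [rel a b | [&& e a b, a \in S & b \in S]].

Definition induces_connected (n : nat) (e : rel 'I_n) (S : {set 'I_n}) : Prop :=
  forall u v, u \in S -> v \in S -> connect (induced e S) u v.

Definition meas_matrix (R : nzRingType) (n : nat) (e : rel 'I_n) (m : nat)
  (A : 'M[R]_(m, n)) : Prop :=
  zero_one A /\
  forall i : 'I_m, row_support A i != set0 -> induces_connected e (row_support A i).

Definition sparse (R : nzRingType) (k n : nat) (x : 'cV[R]_n) : bool :=
  (#|[set j | x j ord0 != 0%R]| <= k)%N.

Definition identifies (R : nzRingType) (k m n : nat) (A : 'M[R]_(m, n)) : Prop :=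
  forall x1 x2 : 'cV[R]_n, sparse k x1 -> sparse k x2 -> x1 != x2 ->
    A *m x1 != A *m x2.

Definition has_graph_design (R : nzRingType) (n : nat) (e : rel 'I_n) (k m : nat)
  : Prop := exists A : 'M[R]_(m, n), meas_matrix e A /\ identifies k A.

Definition has_design (R : nzRingType) (k N m : nat) : Prop :=
  exists A : 'M[R]_(m, N), zero_one A /\ identifies k A.

(* the identity matrix witnesses existence *)
Lemma zero_one_id (R : nzRingType) n : zero_one (1%:M : 'M[R]_n).
Proof.
apply/forallP=> i; apply/forallP=> j; rewrite !mxE.
by case: (i == j); rewrite ?eqxx ?orbT.
Qed.

Lemma identifies_id (R : nzRingType) k n : identifies k (1%:M : 'M[R]_n).
Proof. by move=> x1 x2 _ _; rewrite !mul1mx. Qed.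

Lemma has_graph_design_ex (R : nzRingType) (n : nat) (e : rel 'I_n) (k : nat) :
  exists m, pbool (has_graph_design R e k m).
Proof.
exists n; apply/pboolP; exists 1%:M; split; last exact: identifies_id.
split; first exact: zero_one_id.
move=> i _ u v; rewrite !inE !mxE.
case: (eqVneq i u) => [<-|_]; last by rewrite eqxx.
case: (eqVneq i v) => [<-|_]; last by rewrite eqxx.
by move=> _ _; exact: connect0.
Qed.

Lemma has_design_ex (R : nzRingType) (k N : nat) :
  exists m, pbool (has_design R k N m).
Proof.
exists N; apply/pboolP; exists 1%:M; split; [exact: zero_one_id | exact: identifies_id].
Qed.

Definition MG (R : nzRingType) (n : nat) (e : rel 'I_n) (k : nat) : nat :=
  ex_minn (has_graph_design_ex R e k).

Definition MC (R : nzRingType) (k N : nat) : nat :=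
  ex_minn (has_design_ex R k N).

From HB Require Import structures.
From mathcomp Require Import all_boot all_order all_algebra.
Set Implicit Arguments. Unset Strict Implicit. Unset Printing Implicit Defensive.
Import GRing.Theory.

(* Let r be the root and write ball j for the nodes at distance < j from r.
   For each layer L_j we take an optimal unconstrained design B_j identifying
   k-sparse vectors on L_j, and build the block of rows
        [ 1_{ball j} ] + B_j * sel(L_j),
   i.e. every row of B_j, read on L_j, is completed by ones on the whole
   ball j.  Such a row has support between ball j and ball j.+1, and any
   such set is connected in a connected graph, since every node of it can
   walk down to r along strictly decreasing distances.  Stacking the blocks
   for j = 0 .. depth gives a measurement matrix with
   sum_j M^C_{k,|L_j|} rows; it identifies k-sparse vectors because, by
   induction on j, once two sparse vectors with equal measurements agree on
   ball j, the ball part of block j cancels and B_j identifies their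
   restrictions to L_j. *)

Section Distance.
Variables (n : nat) (e : rel 'I_n) (r : 'I_n).

Lemma walkbP v m :
  reflect (exists p : seq 'I_n, [/\ size p = m, path e r p & last r p = v])
          (walkb e r v m).
Proof.
apply: (iffP existsP) => [[p /andP[pp /eqP lp]]|[p [sp pp lp]]].
  by exists (val p); rewrite size_tuple.
have sp' : size p == m by rewrite sp.
by exists (Tuple sp'); rewrite /= pp lp eqxx.
Qed.

(* A reachable node is reached by a walk of length [dist], which is < n
   because a shortest walk visits distinct nodes. *)
Lemma dist_walk v : connect e r v -> (dist e r v < n)%N /\ walkb e r v (dist e r v).
Proof.
move/connectP=> [p pp ->]; case: (shortenP pp) => p' pp' up' _.
have short : (size p' < n)%N.
  by have := max_card (mem (r :: p')); rewrite card_ord (card_uniqP up').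
have found : has (walkb e r (last r p')) (iota 0 n).
  apply/hasP; exists (size p'); first by rewrite mem_iota add0n short.
  by apply/walkbP; exists p'.
have dlt : (dist e r (last r p') < n)%N by move: (found); rewrite has_find size_iota.
by split=> //; have := nth_find 0 found; rewrite nth_iota.
Qed.

Lemma dist_min v m : (m < n)%N -> walkb e r v m -> (dist e r v <= m)%N.
Proof.
move=> mn w; rewrite leqNgt; apply/negP => lt.
by have := before_find 0 lt; rewrite nth_iota // w.
Qed.

Lemma dist0_root v : connect e r v -> dist e r v = 0%N -> v = r.
Proof.
move=> c d0; have [_] := dist_walk c; rewrite d0 => /walkbP [p [sp _ lp]].
by move: sp lp; case: p.
Qed.

(* Every reachable node other than the root has a neighbour strictly closer
   to the root: the penultimate node of a shortest walk. *)
Lemma dist_parent v : connect e r v -> (0 < dist e r v)%N ->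
  exists2 w, e w v & (dist e r w < dist e r v)%N.
Proof.
move=> c dpos; have [dn /walkbP [p [sp pp lp]]] := dist_walk c.
case/lastP: p sp pp lp => [|q x]; first by move=> sp; rewrite -sp in dpos.
rewrite size_rcons rcons_path last_rcons => sp /andP[pq ex] xv.
exists (last r q); first by rewrite -xv.
apply: (@leq_ltn_trans (size q)); last by rewrite -sp.
apply: dist_min; first by apply: ltn_trans dn; rewrite -sp.
by apply/walkbP; exists q.
Qed.

Definition ball (j : nat) : {set 'I_n} := [set v | (dist e r v < j)%N].

Lemma ball_layer_disjoint j v : v \in ball j -> v \notin layer e r j.
Proof. by rewrite !inE => dv; rewrite neq_ltn dv. Qed.

Lemma ball_succ j v : (v \in ball j.+1) = (v \in ball j) || (v \in layer e r j).
Proof. by rewrite !inE ltnS leq_eqVlt orbC. Qed.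

Lemma ball_depth v : v \in ball (depth e r).+1.
Proof. by rewrite inE ltnS; exact: (@leq_bigmax _ (fun w => dist e r w) v). Qed.

End Distance.

Section BallConnectivity.
Variables (n : nat) (e : rel 'I_n) (r : 'I_n).
Hypotheses (sym_e : symmetric e) (conn_e : connected e).

(* In a set S containing every node closer to r than v, the node v is
   joined to r inside S, by descending along parents. *)
Lemma descend_to_root (S : {set 'I_n}) v : v \in S ->
  (forall u, (dist e r u < dist e r v)%N -> u \in S) -> connect (induced e S) r v.
Proof.
elim/ltn_ind: {v}(dist e r v) {-2}v (erefl (dist e r v)) => d IH v dv vS below.
case: (posnP d) => [d0|dpos].
  by rewrite (dist0_root (conn_e r v) (etrans dv d0)); exact: connect0.
have [w ewv dw] := dist_parent (conn_e r v) (leq_trans dpos (eq_leq (esym dv))).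
have wS : w \in S by exact: below.
apply: connect_trans (IH _ _ w erefl wS _) _; first by rewrite -dv.
  by move=> u du; apply: below; exact: ltn_trans du dw.
by apply: connect1; apply/and3P.
Qed.

Lemma ball_induces_connected j (S : {set 'I_n}) :
  ball e r j \subset S -> S \subset ball e r j.+1 -> induces_connected e S.
Proof.
move=> /subsetP inner /subsetP outer.
have toS u : (dist e r u < j)%N -> u \in S by move=> du; apply: inner; rewrite inE.
have fromS v : v \in S -> (dist e r v <= j)%N by move/outer; rewrite inE ltnS.
have sym_ind : connect_sym (induced e S).
  by apply: sym_connect_sym => a b; rewrite /induced /= sym_e (andbC (a \in S)).
have fromr w : w \in S -> connect (induced e S) r w.
  move=> wS; apply: descend_to_root => // x dx; apply: toS.
  exact: leq_trans dx (fromS w wS).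
move=> u v uS vS; apply: connect_trans (fromr v vS).
by rewrite sym_ind; exact: fromr.
Qed.

End BallConnectivity.

Local Open Scope ring_scope.

Section Selection.
Variables (R : nzRingType) (n : nat) (L : {set 'I_n}).

Definition sel : 'M[R]_(#|L|, n) := \matrix_(u, v) (enum_val u == v)%:R.

Lemma sel_mul (x : 'cV[R]_n) u : (sel *m x) u ord0 = x (enum_val u) ord0.
Proof.
rewrite mxE (bigD1 (enum_val u)) //= mxE eqxx mul1r big1 ?addr0 // => v nv.
by rewrite mxE eq_sym (negbTE nv) mul0r.
Qed.

Lemma mul_sel_val m (B : 'M[R]_(m, #|L|)) t u : (B *m sel) t (enum_val u) = B t u.
Proof.
rewrite mxE (bigD1 u) //= mxE eqxx mulr1 big1 ?addr0 // => w nw.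
by rewrite mxE (inj_eq enum_val_inj) (negbTE nw) mulr0.
Qed.

Lemma mul_sel_out m (B : 'M[R]_(m, #|L|)) t v : v \notin L -> (B *m sel) t v = 0.
Proof.
move=> vL; rewrite mxE big1 // => u _; rewrite mxE.
by case: eqP => [hv|_]; [move: vL; rewrite -hv enum_valP | rewrite mulr0].
Qed.

Lemma sparse_sel k (x : 'cV[R]_n) : sparse k x -> sparse k (sel *m x).
Proof.
rewrite /sparse => sx; apply: leq_trans sx.
rewrite -(card_imset _ (@enum_val_inj _ (mem L))); apply: subset_leq_card.
by apply/subsetP => w /imsetP [u]; rewrite !inE sel_mul => nz ->.
Qed.

End Selection.

Section Stacking.
Variables (R : nzRingType) (n m1 m2 : nat).
Variables (A : 'M[R]_(m1, n)) (C : 'M[R]_(m2, n)).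

Lemma zero_one_col_mx : zero_one A -> zero_one C -> zero_one (col_mx A C).
Proof.
move=> /forallP zA /forallP zC; apply/forallP => t; apply/forallP => v.
by rewrite -(splitK t); case: (split t) => t' /=; rewrite (col_mxEu, col_mxEd);
  [move/forallP: (zA t') | move/forallP: (zC t')].
Qed.

Lemma row_support_col_mx (P : {set 'I_n} -> Prop) :
  (forall t, P (row_support A t)) -> (forall t, P (row_support C t)) ->
  forall t, P (row_support (col_mx A C) t).
Proof.
move=> PA PC t; rewrite -(splitK t); case: (split t) => t' /=.
  by have -> : row_support (col_mx A C) (lshift m2 t') = row_support A t'
    by apply/setP => v; rewrite !inE col_mxEu.
by have -> : row_support (col_mx A C) (rshift m1 t') = row_support C t'
  by apply/setP => v; rewrite !inE col_mxEd.
Qed.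

End Stacking.

Lemma MC_spec (R : nzRingType) k N : has_design R k N (MC R k N).
Proof. by rewrite /MC; case: ex_minnP => m /pboolP. Qed.

Section LayerBlock.
Variables (R : nzRingType) (n : nat) (e : rel 'I_n) (r : 'I_n) (k : nat).
Hypotheses (sym_e : symmetric e) (conn_e : connected e).

Definition agree_on (S : {set 'I_n}) (x1 x2 : 'cV[R]_n) : Prop :=
  forall v, v \in S -> x1 v ord0 = x2 v ord0.

Definition ball_rows m j : 'M[R]_(m, n) := \matrix_(t, v) (v \in ball e r j)%:R.

Definition layer_block m j (B : 'M[R]_(m, #|layer e r j|)) : 'M[R]_(m, n) :=
  ball_rows m j + B *m sel R (layer e r j).

Lemma ball_rows_agree m j (x1 x2 : 'cV[R]_n) :
  agree_on (ball e r j) x1 x2 -> ball_rows m j *m x1 = ball_rows m j *m x2.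
Proof.
move=> agree; apply/matrixP => t i; rewrite (ord1 i) !mxE; apply: eq_bigr => v _.
by rewrite mxE; case: (boolP (v \in ball e r j)) => vB; rewrite ?mul0r // agree.
Qed.

Section OneLayer.
Variables (m j : nat) (B : 'M[R]_(m, #|layer e r j|)).

Lemma layer_block_ball t v : v \in ball e r j -> layer_block B t v = 1.
Proof.
by move=> vB; rewrite mxE [X in X + _]mxE vB mul_sel_out ?addr0 // ball_layer_disjoint.
Qed.

Lemma layer_block_out t v : v \notin ball e r j -> layer_block B t v = (B *m sel R _) t v.
Proof. by move=> vB; rewrite mxE [X in X + _]mxE (negbTE vB) add0r. Qed.

Lemma zero_one_layer_block : zero_one B -> zero_one (layer_block B).
Proof.
move=> /forallP zB; apply/forallP => t; apply/forallP => v.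
case: (boolP (v \in ball e r j)) => vB; first by rewrite layer_block_ball // eqxx orbT.
rewrite layer_block_out //; case: (boolP (v \in layer e r j)) => vL.
  by rewrite -(enum_rankK_in vL vL) mul_sel_val; move/forallP: (zB t).
by rewrite mul_sel_out // eqxx.
Qed.

Lemma layer_block_connected t : induces_connected e (row_support (layer_block B) t).
Proof.
apply: (@ball_induces_connected _ _ r sym_e conn_e j); apply/subsetP => v.
  by move=> vB; rewrite inE layer_block_ball // oner_neq0.
rewrite inE ball_succ; case: (boolP (v \in ball e r j)) => //= vB.
by rewrite layer_block_out //; apply: contraR => vL; rewrite mul_sel_out.
Qed.

Lemma layer_block_extends (x1 x2 : 'cV[R]_n) :
  identifies k B -> sparse k x1 -> sparse k x2 ->
  agree_on (ball e r j) x1 x2 -> layer_block B *m x1 = layer_block B *m x2 ->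
  agree_on (ball e r j.+1) x1 x2.
Proof.
move=> idB s1 s2 agree; rewrite !mulmxDl !(ball_rows_agree m agree) -!mulmxA.
move/addrI => Bsel; have selE : sel R (layer e r j) *m x1 = sel R (layer e r j) *m x2.
  apply/eqP; apply: contraT => neq.
  by have := idB _ _ (sparse_sel _ s1) (sparse_sel _ s2) neq; rewrite Bsel eqxx.
move=> v; rewrite ball_succ => /orP [vB|vL]; first exact: agree.
have := congr1 (fun M : 'cV[R]__ => M (enum_rank_in vL v) ord0) selE.
by rewrite /= !sel_mul (enum_rankK_in vL vL).
Qed.

End OneLayer.

Lemma layered_design j :
  exists A : 'M[R]_(\sum_(i < j) MC R k #|layer e r i|, n),
  [/\ zero_one A, forall t, induces_connected e (row_support A t) &
      forall x1 x2 : 'cV[R]_n, sparse k x1 -> sparse k x2 ->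
        A *m x1 = A *m x2 -> agree_on (ball e r j) x1 x2].
Proof.
elim: j => [|j [A [zA cA iA]]].
  rewrite big_ord0; exists 0; split=> [||x1 x2 _ _ _ v]; last by rewrite inE.
    by apply/forallP => [[]].
  by case.
have [B [zB idB]] := MC_spec R k #|layer e r j|.
rewrite big_ord_recr /=; exists (col_mx A (layer_block B)); split.
- by apply: zero_one_col_mx; last exact: zero_one_layer_block.
- by apply: row_support_col_mx => // t; exact: layer_block_connected.
move=> x1 x2 s1 s2; rewrite !mul_col_mx => /eq_col_mx [Ax Cx].
exact: layer_block_extends idB s1 s2 (iA _ _ s1 s2 Ax) Cx.
Qed.

End LayerBlock.

Lemma MG_le (R : nzRingType) n (e : rel 'I_n) k m :
  has_graph_design R e k m -> (MG R e k <= m)%N.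
Proof. by move=> /pboolP H; rewrite /MG; case: ex_minnP => m' _ /(_ _ H). Qed.

Theorem theorem6 (R : realFieldType) (n : nat) (e : rel 'I_n) (r : 'I_n) (k : nat) :
  is_tree e -> (1 <= k)%N ->
  (MG R e k <= \sum_(i < (depth e r).+1) MC R k #|layer e r i|)%N.
Proof.
move=> [[sym_e _] [conn_e _]] _; apply: MG_le.
have [A [zA cA iA]] := layered_design R r k sym_e conn_e (depth e r).+1.
exists A; split; first by split=> // t _; exact: cA.
move=> x1 x2 s1 s2; apply: contra_neq => Ax.
apply/matrixP => v i; rewrite (ord1 i); apply: (iA _ _ s1 s2 Ax).
exact: ball_depth.
Qed.
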